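(* For every integer $n>3$ there exists a latin square of order $n$ containing a cell that is not contained in any transversal of the square.
   Context: A latin square of order $n$ is an $n\times n$ array of $n$ symbols in which each symbol occurs exactly once in each row and column. A transversal is a set of $n$ cells, one from each row and one from each column, no two containing the same symbol. *)

From mathcomp Require Import all_boot all_fingroup.
Set Implicit Arguments. Unset Strict Implicit. Unset Printing Implicit Defensive.

(* A square array of order n with symbols in 'I_n: L i j is the symbol in row i, column j. *)
Definition latin_square (n : nat) (L : 'I_n -> 'I_n -> 'I_n) : Prop :=
  (forall i, injective (L i)) /\ (forall j, injective (fun i => L i j)).

(* A transversal: n cells, one per row and one per column, i.e. the cells
   (i, s i) for a permutation s of the columns, with pairwise distinct symbols. *)
Definition latin_transversal (n : nat) (L : 'I_n -> 'I_n -> 'I_n) (s : {perm 'I_n}) : Prop :=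
  injective (fun i => L i (s i)).

Definition cell_in_transversal (n : nat) (s : {perm 'I_n}) (r c : 'I_n) : Prop :=
  s r = c.

From mathcomp Require Import all_boot all_fingroup zify.
Set Implicit Arguments. Unset Strict Implicit. Unset Printing Implicit Defensive.

(* All squares used here are "shifted" squares
     L i j = (shift i j + j) mod n,
   whose columns are latin as soon as each column of [shift] is injective.
   If s is a transversal of such a square, both j |-> L i (s i) and s are
   bijections of 'I_n, so summing gives  sum_i shift i (s i) = 0 (mod n).
   - For even n the cyclic square (shift i j = i) has no transversal at all,
     since sum_(i < n) i = n(n-1)/2 is not divisible by n.
   - For odd n > 3 we use a patched cyclic square that permutes the shifts of
     rows 0, 1 and 2 column by column, with shift 1 1 = 2.  A transversal
     through the cell (1, 1) would force the shifts of rows 0 and 2 to add up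
     to 1 (the congruence above, with all other rows unchanged), so one of
     them is 1; in both cases this clashes with the cell (1, 1) itself. *)

Lemma sum_ord_inj n (f : 'I_n -> 'I_n) :
  injective f -> \sum_(i < n) (f i : nat) = \sum_(i < n) (i : nat).
Proof. by move=> f_inj; rewrite [RHS](reindex_inj f_inj). Qed.

Lemma dvdn_sum_ord n : 0 < n -> (n %| \sum_(i < n) (i : nat)) = odd n.
Proof.
move=> n_gt0; rewrite -(big_mkord xpredT (fun i => i)) bin2_sum.
case: (boolP (odd n)) => [n_odd | n_even]; first by rewrite bin2odd // dvdn_mulr.
have [m def_n] : exists m, n = 2 * m by exists n./2; rewrite mul2n even_halfK.
have m_gt0 : 0 < m by lia.
apply/negbTE/negP; rewrite bin2 -divn2 def_n -mulnA mulKn // => /dvdnP[k].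
rewrite [k * _]mulnC -mulnA mulnCA => /eqP; rewrite eqn_pmul2l // => /eqP; lia.
Qed.

Lemma sum_split_seq (I : finType) (r : seq I) (F : I -> nat) : uniq r ->
  \sum_i F i = \sum_(i <- r) F i + \sum_(i | i \notin r) F i.
Proof. by move=> r_uniq; rewrite (bigID (mem r)) big_uniq. Qed.

Lemma eq_mod_lt_double n x y : x < n + n -> y < n + n -> x = y %[mod n] ->
  [\/ x = y, x = y + n | y = x + n].
Proof.
move=> x_lt y_lt; case: (ltnP x n) => x_n; case: (ltnP y n) => y_n.
- by rewrite !modn_small // => ->; apply: Or31.
- rewrite (modn_small x_n) -(subnK y_n) modnDr modn_small; last by lia.
  by move=> x_eq; apply: Or33; lia.
- rewrite (modn_small y_n) -(subnK x_n) modnDr modn_small; last by lia.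
  by move=> y_eq; apply: Or32; lia.
- rewrite -(subnK x_n) -(subnK y_n) !modnDr !modn_small; try lia.
  by move=> xy_eq; apply: Or31; lia.
Qed.

Section ShiftedSquare.

Variables (n : nat) (n_gt0 : 0 < n) (shift : 'I_n -> 'I_n -> nat).

Definition shifted_square (i j : 'I_n) : 'I_n :=
  Ordinal (ltn_pmod (shift i j + j) n_gt0).

Lemma shifted_squareE i j : shifted_square i j = (shift i j + j) %% n :> nat.
Proof. by []. Qed.

Lemma shifted_square_col_inj :
  (forall i j, shift i j < n) -> (forall j, injective (shift^~ j)) ->
  forall j, injective (fun i => shifted_square i j).
Proof.
move=> shift_lt shift_inj j i1 i2 /(congr1 val) /eqP /=.
by rewrite eqn_modDr !modn_small // => /eqP /shift_inj.
Qed.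

Lemma shifted_transversal_sum (s : {perm 'I_n}) :
  latin_transversal shifted_square s -> \sum_i shift i (s i) = 0 %[mod n].
Proof.
move=> s_transv.
have sum_entries : \sum_i (shift i (s i) + s i) %% n = \sum_(i < n) (i : nat)
  := sum_ord_inj s_transv.
have sum_cols := sum_ord_inj (@perm_inj _ s).
apply/eqP; rewrite -(eqn_modDr (\sum_(i < n) (i : nat))) add0n.
by rewrite -[X in _ + X]sum_cols -big_split -modn_summ sum_entries.
Qed.

End ShiftedSquare.

Section CyclicSquare.

Variables (n : nat) (n_gt0 : 0 < n).

Definition cyclic_square : 'I_n -> 'I_n -> 'I_n :=
  shifted_square n_gt0 (fun i _ => i).

Lemma cyclic_square_latin : latin_square cyclic_square.
Proof.
split; last by apply: shifted_square_col_inj => // j i1 i2 /val_inj.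
move=> i j1 j2 /(congr1 val) /eqP /=.
by rewrite eqn_modDl !modn_small // => /eqP /val_inj.
Qed.

Lemma cyclic_square_no_transversal (s : {perm 'I_n}) :
  ~~ odd n -> ~ latin_transversal cyclic_square s.
Proof.
move=> n_even /shifted_transversal_sum /eqP; rewrite mod0n -/(dvdn _ _).
by rewrite dvdn_sum_ord // (negbTE n_even).
Qed.

End CyclicSquare.

(* The shifts of rows 0, 1, 2 of the patched square; every other row i keeps
   the cyclic shift i.  Column by column they permute {0, 1, 2}:
       column j :   0  1  2  odd j >= 3  even j >= 4
       row 0    :   0  1  2      0           2
       row 1    :   1  2  0      1           1
       row 2    :   2  0  1      2           0                               *)
Definition patch (i j : nat) : nat :=
  match i, j with
  | 0, 0 => 0 | 0, 1 => 1 | 0, 2 => 2 | 0, _ => if odd j then 0 else 2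
  | 1, 1 => 2 | 1, 2 => 0 | 1, _ => 1
  | 2, 0 => 2 | 2, 1 => 0 | 2, 2 => 1 | 2, _ => if odd j then 2 else 0
  | _, _ => i
  end.

Lemma patch_id i j : 2 < i -> patch i j = i.
Proof. by case: i => [|[|[|i]]]. Qed.

Lemma patch_le2 i j : i < 3 -> patch i j <= 2.
Proof. by case: i => [|[|[|i]]] // _; case: j => [|[|[|j]]] //=; case: odd. Qed.

Lemma patch_row0_eq1 j : patch 0 j = 1 -> j = 1.
Proof. by case: j => [|[|[|j]]] //=; case: odd. Qed.

Lemma patch_row2_eq1 j : patch 2 j = 1 -> j = 2.
Proof. by case: j => [|[|[|j]]] //=; case: odd. Qed.

Lemma patch_inj j : injective (patch^~ j).
Proof.
move=> i1 i2; case: (ltnP i1 3) => i1_lt; case: (ltnP i2 3) => i2_lt.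
- move: i1_lt i2_lt; case: i1 => [|[|[|i1]]] // _; case: i2 => [|[|[|i2]]] // _;
  by case: j => [|[|[|j]]] //=; case: odd.
- by rewrite (patch_id j i2_lt) => eq_i; have := patch_le2 j i1_lt; lia.
- by rewrite (patch_id j i1_lt) => eq_i; have := patch_le2 j i2_lt; lia.
- by rewrite !patch_id.
Qed.

(* Row values stay
   below n + 2, so a coincidence modulo n is an equality or a wrap-around by
   n; writing n, j1, j2 as (parity + twice their half) excludes all cases. *)
Lemma patch_row_inj n i j1 j2 : odd n -> 3 < n -> j1 < n -> j2 < n ->
  patch i j1 + j1 = patch i j2 + j2 %[mod n] -> j1 = j2.
Proof.
move=> n_odd n_gt3 j1_lt j2_lt.
case: (ltnP i 3) => i_lt; last first.
  by rewrite !patch_id // => /eqP; rewrite eqn_modDl !modn_small // => /eqP.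
have := patch_le2 j1 i_lt; have := patch_le2 j2 i_lt.
move=> le2 le1 /eq_mod_lt_double; move/(_ ltac:(lia) ltac:(lia)) => {le1 le2}.
have parity k : k = odd k + 2 * k./2 by rewrite mul2n odd_double_half.
have := parity n; have := parity j1; have := parity j2; rewrite n_odd.
case: i i_lt => [|[|[|//]]] _;
case: j1 j1_lt => [|[|[|j1]]] j1_lt; case: j2 j2_lt => [|[|[|j2]]] j2_lt //=.
all: try case: (odd j1); try case: (odd j2); rewrite /=.
all: by move=> ? ? ? []; lia.
Qed.

Section PatchedSquare.

Variables (n : nat) (n_gt0 : 0 < n).

Definition patched_square : 'I_n -> 'I_n -> 'I_n :=
  shifted_square n_gt0 patch.

Hypotheses (n_odd : odd n) (n_gt3 : 3 < n).

Lemma patched_square_latin : latin_square patched_square.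
Proof.
split; last first.
  apply: shifted_square_col_inj => [i j | j i1 i2 /patch_inj /val_inj //].
  by case: (ltnP i 3) => [/(patch_le2 j) | /(patch_id j) ->]; first lia.
move=> i j1 j2 /(congr1 val) /eqP /=; rewrite -/(_ == _ %[mod n]) => /eqP.
by move/(patch_row_inj n_odd n_gt3 (ltn_ord j1) (ltn_ord j2))/val_inj.
Qed.

(* In a transversal through the cell (1, 1) the shifts met in rows 0 and 2
   add up to 1: by [shifted_transversal_sum] the shifts met add up to
   0 + 1 + ... + (n - 1) modulo n, every other row contributes its cyclic
   shift, and the three patched shifts are at most 2 while n >= 5. *)
Lemma patched_transversal_rows02 (s : {perm 'I_n}) (r0 r1 r2 : 'I_n) :
  r0 = 0 :> nat -> r1 = 1 :> nat -> r2 = 2 :> nat ->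
  latin_transversal patched_square s -> s r1 = r1 ->
  patch r0 (s r0) + patch r2 (s r2) = 1.
Proof.
move=> r0_0 r1_1 r2_2 s_transv s_r1.
have rows_uniq : uniq [:: r0; r1; r2].
  by rewrite /= !in_cons !in_nil -!val_eqE /= r0_0 r1_1 r2_2.
have sum_patch := shifted_transversal_sum s_transv.
have sum_rows : \sum_(i < n) (i : nat) = 0 %[mod n].
  by apply/eqP; rewrite mod0n -/(dvdn _ _) dvdn_sum_ord.
rewrite (sum_split_seq _ rows_uniq) in sum_patch.
rewrite (sum_split_seq _ rows_uniq) in sum_rows.
rewrite [X in _ + X](eq_bigr val) in sum_patch; last first.
  move=> i; rewrite !in_cons in_nil -!val_eqE /= r0_0 r1_1 r2_2.
  move=> /norP[i_n0 /norP[i_n1 /norP[i_n2 _]]].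
  by apply: patch_id; lia.
have patch_r1 : patch r1 (s r1) = 2 by rewrite s_r1 r1_1.
rewrite !big_cons !big_nil patch_r1 in sum_patch sum_rows.
rewrite r0_0 r1_1 r2_2 in sum_rows.
have a_le2 : patch r0 (s r0) <= 2 by apply: patch_le2; rewrite r0_0.
have c_le2 : patch r2 (s r2) <= 2 by apply: patch_le2; rewrite r2_2.
set a := patch r0 (s r0) in sum_patch a_le2 *.
set c := patch r2 (s r2) in sum_patch c_le2 *.
set rest := \sum_(i | _) _ in sum_patch sum_rows.
have : a + c + (2 + rest) = 1 + (2 + rest) %[mod n].
  have -> : a + c + (2 + rest) = a + (2 + (c + 0)) + rest by lia.
  by rewrite sum_patch -sum_rows add0n addn0 -addnA.
by move/eqP; rewrite eqn_modDr !modn_small; [move/eqP | lia..].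
Qed.

Lemma patched_square_avoids_11 (s : {perm 'I_n}) (r : 'I_n) :
  r = 1 :> nat -> latin_transversal patched_square s -> s r <> r.
Proof.
move=> r1 s_transv s_rr.
have n_gt2 : 2 < n by lia.
pose r0 := Ordinal n_gt0; pose r2 := Ordinal n_gt2.
have rows02 :=
  patched_transversal_rows02 (r0 := r0) (r2 := r2) erefl r1 erefl s_transv s_rr.
have [a1 | c1] : patch r0 (s r0) = 1 \/ patch r2 (s r2) = 1 by lia.
- (* Shift 1 in row 0 only occurs in column 1, already used by row 1. *)
  have col_r0 : s r0 = s r.
    by apply: ord_inj; rewrite s_rr r1; apply: patch_row0_eq1.
  by move/perm_inj/(congr1 val): col_r0; rewrite /= r1.
- (* Shift 1 in row 2 only occurs in column 2, where the entry 3 repeats the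
     entry of the cell (1, 1). *)
  have same_entry : patched_square r2 (s r2) = patched_square r (s r).
    apply: ord_inj; rewrite !shifted_squareE c1 (patch_row2_eq1 c1).
    by rewrite s_rr r1.
  by move/s_transv/(congr1 val): same_entry; rewrite /= r1.
Qed.

End PatchedSquare.

Theorem theorem1p4 (n : nat) (hn : 3 < n) :
  exists L : 'I_n -> 'I_n -> 'I_n,
    latin_square L /\
    exists r c : 'I_n,
      forall s : {perm 'I_n}, latin_transversal L s -> ~ cell_in_transversal s r c.
Proof.
have n_gt0 : 0 < n by lia.
have n_gt1 : 1 < n by lia.
pose one := Ordinal n_gt1.
case: (boolP (odd n)) => [n_odd | n_even].
- exists (patched_square n_gt0); split; first exact: patched_square_latin.
  by exists one, one => s /(patched_square_avoids_11 n_odd hn (r := one)); apply.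
- exists (cyclic_square n_gt0); split; first exact: cyclic_square_latin.
  by exists one, one => s /(cyclic_square_no_transversal n_even).
Qed.
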